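(* Let $M=(C,A,B)$ with $C\in\mathbb{R}^{p\times n}$, $A\in\mathbb{R}^{n\times n}$, $B\in\mathbb{R}^{n\times m}$ and $\rho(A)<1$. For any integers $d_1\ge d_2\ge1$, $$\|\mathcal{H}_{0,\infty,\infty}-\bar{\mathcal{H}}_{0,d_1,d_1}\|_2\le\sqrt2\,\|\mathcal{H}_{0,\infty,\infty}-\bar{\mathcal{H}}_{0,d_2,d_2}\|_2 .$$
   Context: $\mathcal{H}_{k,a,b}$ is the block Hankel matrix whose $(i,j)$ block ($1\le i\le a$, $1\le j\le b$, $a=b=\infty$ allowed) is $CA^{k+i+j-2}B$. For a finite matrix $P$, $\bar P$ denotes $P$ padded with zeros to a doubly infinite matrix. Norms of infinite matrices are operator norms on $\ell^2$. *)

From HB Require Import structures.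
From mathcomp Require Import all_boot all_order all_algebra.
From mathcomp Require Import all_classical all_reals ereal.
From mathcomp Require Import complex.
Set Implicit Arguments. Unset Strict Implicit. Unset Printing Implicit Defensive.
Import Order.TTheory GRing.Theory Num.Theory.
Local Open Scope ring_scope.

(* rho(A) < 1 : every (complex) eigenvalue of A, i.e. every complex root of
   the characteristic polynomial of A, has modulus < 1. *)
Definition spectral_radius_lt1 (R : realType) (n : nat) (A : 'M[R]_n) : Prop :=
  forall z : R[i], root (map_poly (real_complex R) (char_poly A)) z -> `|z| < 1.

(* Infinite block matrices: the (i,j) block (i,j : nat, 0-indexed) is a p x m
   real matrix; they act on l^2(nat x 'I_m) -> l^2(nat x 'I_p). *)
Definition blockmx (R : Type) (p m : nat) := nat -> nat -> 'M[R]_(p, m).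

(* l^2 operator norm (extended real, +oo if unbounded), computed as the
   supremum of ||H x|| over the dense subspace of finitely supported x with
   ||x|| <= 1 (x supported on the first N block-columns), the l^2 norm of
   H x being the supremum of its partial sums over the first M block-rows. *)
Definition opnorm (R : realType) (p m : nat) (H : blockmx R p m) : \bar R :=
  ereal_sup [set e : \bar R | exists (N M : nat) (x : 'I_N -> 'I_m -> R),
     \sum_(j < N) \sum_(c < m) x j c ^+ 2 <= 1 /\
     e = (Num.sqrt (\sum_(i < M) \sum_(r < p)
            (\sum_(j < N) \sum_(c < m) H i j r c * x j c) ^+ 2))%:E].

(* Block Hankel matrix H_{k,inf,inf}: (i,j) block (1-indexed in the paper)
   C A^(k+i+j-2) B, i.e. C A^(k+i+j) B with 0-indexed i, j. *)
Definition hankel_inf (R : realType) (p n m : nat) (C : 'M[R]_(p, n))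
  (A : 'M[R]_n) (B : 'M[R]_(n, m)) (k : nat) : blockmx R p m :=
  fun i j => C *m (A ^+ (k + i + j)) *m B.

Definition hankel_pad (R : realType) (p n m : nat) (C : 'M[R]_(p, n))
  (A : 'M[R]_n) (B : 'M[R]_(n, m)) (k a b : nat) : blockmx R p m :=
  fun i j => if (i < a)%N && (j < b)%N then C *m (A ^+ (k + i + j)) *m B else 0.

Definition blockmx_sub (R : realType) (p m : nat) (H K : blockmx R p m)
  : blockmx R p m := fun i j => H i j - K i j.

From HB Require Import structures.
From mathcomp Require Import all_boot all_order all_algebra.
From mathcomp Require Import all_classical all_reals ereal.
From mathcomp Require Import complex.
Import Order.TTheory GRing.Theory Num.Theory.
Local Open Scope ring_scope.

(* Since [d2 <= d1], the error [E1 = H - Hbar_(d1,d1)] is the error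
   [E2 = H - Hbar_(d2,d2)] with its top-left d1 x d1 block replaced by zero.
   A block row [i >= d1] of [E1 x] equals that of [E2 x], while a block row
   [i < d1] only sees the columns [j >= d1], so it equals the same row of
   [E2 x'] with [x'] the restriction of [x] to those columns.  As
   [|x'| <= |x|], this gives [|E1 x|^2 <= |E2 x|^2 + |E2 x'|^2 <= 2 |E2|^2]. *)

Lemma sqrtrD_le_max (R : rcfType) (a b : R) : 0 <= a -> 0 <= b ->
  Num.sqrt (a + b) <= Num.sqrt 2 * Num.max (Num.sqrt a) (Num.sqrt b).
Proof.
move=> a0 b0; set w := Num.max _ _.
have w0 : 0 <= w by rewrite le_max sqrtr_ge0.
have le_w2 c : 0 <= c -> Num.sqrt c <= w -> c <= w ^+ 2.
  by move=> c0 cw; rewrite -[c]sqr_sqrtr // lerXn2r ?nnegrE ?sqrtr_ge0.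
have abw : a + b <= 2 * w ^+ 2.
  by rewrite mulr2n mulrDl mul1r lerD ?le_w2 // /w le_max lexx ?orbT.
by rewrite -(ger0_norm w0) -sqrtr_sqr -sqrtrM ?ler0n // ler_wsqrtr.
Qed.

Section ZeroCorner.
Variables (R : realType) (p m : nat).
Implicit Types (K : blockmx R p m) (d M : nat).

Definition blockmx_zero_corner d K : blockmx R p m :=
  fun i j => if (i < d)%N && (j < d)%N then 0 else K i j.

Definition sqnorm_trunc K {N} M (x : 'I_N -> 'I_m -> R) : R :=
  \sum_(i < M) \sum_(r < p) (\sum_(j < N) \sum_(c < m) K i j r c * x j c) ^+ 2.

Definition vec_tail d {N} (x : 'I_N -> 'I_m -> R) : 'I_N -> 'I_m -> R :=
  fun j c => if (d <= j)%N then x j c else 0.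

Lemma sqnorm_trunc_ge0 K {N} M (x : 'I_N -> 'I_m -> R) : 0 <= sqnorm_trunc K M x.
Proof. by apply: sumr_ge0 => i _; apply: sumr_ge0 => r _; exact: sqr_ge0. Qed.

Lemma sqnorm_vec_tail_le d {N} (x : 'I_N -> 'I_m -> R) :
  \sum_(j < N) \sum_(c < m) vec_tail d x j c ^+ 2
  <= \sum_(j < N) \sum_(c < m) x j c ^+ 2.
Proof.
apply: ler_sum => j _; apply: ler_sum => c _.
by rewrite /vec_tail; case: ifP; rewrite ?expr0n ?sqr_ge0.
Qed.

Lemma opnorm_ge_sqnorm_trunc K {N} M (x : 'I_N -> 'I_m -> R) :
  \sum_(j < N) \sum_(c < m) x j c ^+ 2 <= 1 ->
  ((Num.sqrt (sqnorm_trunc K M x))%:E <= opnorm K)%E.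
Proof. by move=> x1; apply: ereal_sup_ubound; exists N, M, x. Qed.

Lemma sqnorm_trunc_zero_corner d K {N} M (x : 'I_N -> 'I_m -> R) :
  sqnorm_trunc (blockmx_zero_corner d K) M x
  <= sqnorm_trunc K M x + sqnorm_trunc K M (vec_tail d x).
Proof.
rewrite /sqnorm_trunc -big_split /=; apply: ler_sum => i _.
rewrite -big_split /=; apply: ler_sum => r _.
rewrite /blockmx_zero_corner; case: (ltnP i d) => [id | di]; last first.
  by rewrite lerDl sqr_ge0.
rewrite -[X in X <= _]add0r lerD ?sqr_ge0 // le_eqVlt; apply/orP; left.
apply/eqP; congr (_ ^+ 2); apply: eq_bigr => j _; apply: eq_bigr => c _.
by rewrite /vec_tail; case: (ltnP j d) => //= _; rewrite mxE mul0r mulr0.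
Qed.

Lemma opnorm_zero_corner d K :
  (opnorm (blockmx_zero_corner d K) <= (Num.sqrt 2)%:E * opnorm K)%E.
Proof.
apply: ge_ereal_sup => _ [N [M [x [x1 ->]]]].
set U := sqnorm_trunc K M x; set V := sqnorm_trunc K M (vec_tail d x).
have UVK : ((Num.max (Num.sqrt U) (Num.sqrt V))%:E <= opnorm K)%E.
  case: (leP (Num.sqrt U) (Num.sqrt V)) => _.
    exact: opnorm_ge_sqnorm_trunc (le_trans (sqnorm_vec_tail_le d x) x1).
  exact: opnorm_ge_sqnorm_trunc.
apply: le_trans (lee_wpmul2l _ UVK); last by rewrite lee_fin sqrtr_ge0.
rewrite -EFinM lee_fin.
apply: le_trans (ler_wsqrtr (sqnorm_trunc_zero_corner d K M x)) _.
exact/sqrtrD_le_max/sqnorm_trunc_ge0/sqnorm_trunc_ge0.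
Qed.

End ZeroCorner.

Arguments blockmx_zero_corner {R p m}.

Lemma hankel_err_zero_corner {R : realType} {p n m : nat} (C : 'M[R]_(p, n))
  (A : 'M[R]_n) (B : 'M[R]_(n, m)) (k : nat) {d1 d2 : nat} : (d2 <= d1)%N ->
  blockmx_sub (hankel_inf C A B k) (hankel_pad C A B k d1 d1)
  = blockmx_zero_corner d1
      (blockmx_sub (hankel_inf C A B k) (hankel_pad C A B k d2 d2)).
Proof.
move=> d21; apply/funext => i; apply/funext => j.
rewrite /blockmx_zero_corner /blockmx_sub /hankel_pad.
case: (boolP ((i < d1)%N && (j < d1)%N)) => [_ | nd1]; first by rewrite subrr.
suff /negbTE -> : ~~ ((i < d2)%N && (j < d2)%N) by [].
by apply: contra nd1 => /andP[id2 jd2]; rewrite !(leq_trans _ d21).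
Qed.

Theorem proposition14 (R : realType) (p n m : nat) (C : 'M[R]_(p, n))
  (A : 'M[R]_n) (B : 'M[R]_(n, m)) (d1 d2 : nat) :
  spectral_radius_lt1 A -> (1 <= d2)%N -> (d2 <= d1)%N ->
  (opnorm (blockmx_sub (hankel_inf C A B 0) (hankel_pad C A B 0 d1 d1))
   <= (Num.sqrt 2)%:E *
      opnorm (blockmx_sub (hankel_inf C A B 0) (hankel_pad C A B 0 d2 d2)))%E.
Proof.
move=> _ _ d21; rewrite (hankel_err_zero_corner C A B 0 d21).
exact: opnorm_zero_corner.
Qed.
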